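(* Let $\pi>0$, $\bar d>0$, $0<\theta_1<\dots<\theta_K$, $0\le\beta_1<\dots<\beta_M\le1$, $A:[0,D]\to[0,\bar d]$ continuously differentiable and decreasing. Let $L(Q,\beta,\theta)=\theta[\bar d-\beta A(Q)]-\pi(1-\beta)A(Q)$, $\bar S(Q,\Pi,\Lambda)=L(Q,\Lambda)-\Pi$ and $\sigma(Q,\beta,\theta)=-[\theta\beta+\pi(1-\beta)]A'(Q)$. Enumerate the $KM$ types $(\beta_m,\theta_k)$ as $\Lambda_1,\dots,\Lambda_{KM}$ with $\sigma(Q,\Lambda_1)\le\dots\le\sigma(Q,\Lambda_{KM})$, and let $\epsilon$ be an index such that $\bar S(Q,\Pi,\Lambda_\epsilon)\le\bar S(Q,\Pi,\Lambda_i)$ for all $i$ and all $(Q,\Pi)$. Define $\eta^-(\Lambda_i,Q_i,Q_{i-1})=L(Q_i,\Lambda_i)-L(Q_{i-1},\Lambda_i)$ and $\eta^+(\Lambda_i,Q_i,Q_{i+1})=L(Q_i,\Lambda_i)-L(Q_{i+1},\Lambda_i)$. A contract $\{(Q_i,\Pi_i)\}_{i=1}^{KM}$ with $Q_i\in[0,D]$ is feasible (i.e. $\bar S(Q_i,\Pi_i,\Lambda_i)\ge0$ for all $i$ and $\bar S(Q_i,\Pi_i,\Lambda_i)\ge\bar S(Q_j,\Pi_j,\Lambda_i)$ for all $i\ne j$) if all of the following hold: 1) $Q_1\le Q_2\le\dots\le Q_{KM}$; 2) $\Pi_\epsilon\le L(Q_\epsilon,\Lambda_\epsilon)$; 3)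 for all $i=1,\dots,\epsilon-1$: $\Pi_i\le\Pi_{i+1}+\eta^+(\Lambda_i,Q_i,Q_{i+1})$ and $\Pi_i\ge\Pi_{i+1}-\eta^-(\Lambda_{i+1},Q_{i+1},Q_i)$; 4) for all $i=\epsilon+1,\dots,KM$: $\Pi_i\le\Pi_{i-1}+\eta^-(\Lambda_i,Q_i,Q_{i-1})$ and $\Pi_i\ge\Pi_{i-1}-\eta^+(\Lambda_{i-1},Q_{i-1},Q_i)$.
   Context: Model: an operator offers one contract item (data cap $Q_i$, subscription fee $\Pi_i$) for each user type $\Lambda_i=(\beta,\theta)$ (network substitutability $\beta$, data valuation $\theta$). $\pi$ is the overage price, $\bar d$ the mean demand, $A(Q)$ the expected overage consumption under cap $Q$ (decreasing, convex). $L$ is the virtual payoff, $\bar S$ the expected payoff, $\sigma$ the willingness-to-pay (the ordering by $\sigma$ does not depend on $Q$), $\Lambda_\epsilon$ the smallest-payoff type (which exists and does not depend on $(Q,\Pi)$). *)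

From Stdlib Require Import Reals Lra.
From Coquelicot Require Import Coquelicot.
Open Scope R_scope.

Definition Lpay (pi dbar : R) (A : R -> R) (Q b t : R) : R :=
  t * (dbar - b * A Q) - pi * (1 - b) * A Q.

Definition Sbar (pi dbar : R) (A : R -> R) (Q Pi b t : R) : R :=
  Lpay pi dbar A Q b t - Pi.

Definition wtp (pi : R) (A' : R -> R) (Q b t : R) : R :=
  - (t * b + pi * (1 - b)) * A' Q.

(* eta^-(Lambda, Q_i, Q_{i-1}) and eta^+(Lambda, Q_i, Q_{i+1}) :
   both are L(Q_i,Lambda) - L(Q',Lambda); we keep the two names. *)
Definition eta_minus (pi dbar : R) (A : R -> R) (b t Qi Qprev : R) : R :=
  Lpay pi dbar A Qi b t - Lpay pi dbar A Qprev b t.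
Definition eta_plus (pi dbar : R) (A : R -> R) (b t Qi Qnext : R) : R :=
  Lpay pi dbar A Qi b t - Lpay pi dbar A Qnext b t.

Definition feasible (pi dbar : R) (A : R -> R) (N : nat)
    (bt th : nat -> R) (Q Pi : nat -> R) : Prop :=
  (forall i, (1 <= i <= N)%nat -> 0 <= Sbar pi dbar A (Q i) (Pi i) (bt i) (th i)) /\
  (forall i j, (1 <= i <= N)%nat -> (1 <= j <= N)%nat -> i <> j ->
     Sbar pi dbar A (Q j) (Pi j) (bt i) (th i) <= Sbar pi dbar A (Q i) (Pi i) (bt i) (th i)).

From Stdlib Require Import Reals Lra Lia Classical.
From Coquelicot Require Import Coquelicot.
Open Scope R_scope.

(* Conditions 3) and 4) are the incentive constraints between
   adjacent types.  Writing c = theta beta + pi (1 - beta), one has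
   L(Q', Lambda) - L(Q, Lambda) = c (A(Q) - A(Q')) and sigma = - c A'.  If A'
   is negative somewhere, the sigma-ordering makes c nondecreasing along the
   enumeration; otherwise A' >= 0 and the decreasing A is constant.  Either
   way L has increasing differences along the enumeration, so with monotone
   caps the adjacent constraints chain into all incentive constraints.
   Individual rationality then follows from that of Lambda_eps, the type with
   the smallest payoff. *)

Lemma nat_chain_le (u : nat -> R) (lo hi : nat) :
  (forall k, (lo <= k < hi)%nat -> u k <= u (S k)) ->
  forall i j, (lo <= i)%nat -> (i <= j)%nat -> (j <= hi)%nat -> u i <= u j.
Proof.
  intros Hstep i j Hi Hij Hj.
  induction Hij as [|j Hij IH]; [lra|].
  specialize (IH ltac:(lia)). specialize (Hstep j ltac:(lia)). lra.
Qed.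

Section GlobalIC.

Variables (N : nat) (g : nat -> R -> R) (Q Pi : nat -> R).

Hypothesis incr_diff : forall i j k, (1 <= i)%nat -> (i <= j <= N)%nat -> (1 <= k < N)%nat ->
  g i (Q (S k)) - g i (Q k) <= g j (Q (S k)) - g j (Q k).

Hypothesis IC_up : forall k, (1 <= k < N)%nat ->
  g k (Q (S k)) - Pi (S k) <= g k (Q k) - Pi k.

Hypothesis IC_down : forall k, (1 <= k < N)%nat ->
  g (S k) (Q k) - Pi k <= g (S k) (Q (S k)) - Pi (S k).

Lemma global_IC_of_adjacent_IC i j : (1 <= i <= N)%nat -> (1 <= j <= N)%nat ->
  g i (Q j) - Pi j <= g i (Q i) - Pi i.
Proof.
  intros Hi Hj. destruct (Nat.le_gt_cases i j) as [Hij | Hji].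
  - apply Ropp_le_cancel.
    apply (nat_chain_le (fun k => - (g i (Q k) - Pi k)) i N); try lia.
    intros k Hk.
    pose proof (IC_up k ltac:(lia)). pose proof (incr_diff i k k ltac:(lia) ltac:(lia) ltac:(lia)).
    lra.
  - apply (nat_chain_le (fun k => g i (Q k) - Pi k) 1 i); try lia.
    intros k Hk.
    pose proof (IC_down k ltac:(lia)).
    pose proof (incr_diff (S k) i k ltac:(lia) ltac:(lia) ltac:(lia)).
    lra.
Qed.

End GlobalIC.

Lemma filterlim_within_Rabs (f : R -> R) (P : R -> Prop) (x : R) :
  filterlim f (within P (locally x)) (locally (f x)) ->
  forall eps, 0 < eps -> exists del, 0 < del /\
    forall y, P y -> Rabs (y - x) < del -> Rabs (f y - f x) < eps.
Proof.
  intros Hf eps Heps.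
  destruct (Hf (fun z => Rabs (z - f x) < eps)) as [del Hdel].
  { exists (mkposreal eps Heps). now intros y Hy. }
  exists del. split; [apply cond_pos|]. intros y Py Hy. now apply Hdel.
Qed.

Lemma nondecreasing_of_derive_nonneg (f df : R -> R) (a b : R) :
  (forall x, a < x < b -> is_derive f x (df x)) ->
  (forall x, a < x < b -> 0 <= df x) ->
  forall x y, a < x -> x <= y -> y < b -> f x <= f y.
Proof.
  intros Hder Hpos x y Hx Hxy Hy.
  destruct (MVT_gen f x y df) as [c [Hc Hmvt]].
  - intros z Hz. rewrite Rmin_left, Rmax_right in Hz by lra. apply Hder. lra.
  - intros z Hz. rewrite Rmin_left, Rmax_right in Hz by lra.
    apply continuity_pt_filterlim, (ex_derive_continuous f z).
    exists (df z). apply Hder. lra.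
  - rewrite Rmin_left, Rmax_right in Hc by lra.
    assert (0 <= df c * (y - x)) by (apply Rmult_le_pos; [apply Hpos|]; lra).
    lra.
Qed.

Section ConstantOnInterval.

Variables (A A' : R -> R) (D : R).

Hypothesis A_cont : forall x, 0 <= x <= D ->
  filterlim A (within (fun y => 0 <= y <= D) (locally x)) (locally (A x)).
Hypothesis A_der : forall x, 0 < x < D -> is_derive A x (A' x).
Hypothesis A_decr : forall x y, 0 <= x -> x <= y -> y <= D -> A y <= A x.

(* The derivative only controls A on the open interval; continuity within
   [0, D] carries the monotonicity to the endpoints. *)
Lemma decreasing_const_of_derive_nonneg :
  (forall x, 0 < x < D -> 0 <= A' x) ->
  forall q q', 0 <= q -> q <= q' -> q' <= D -> A q = A q'.
Proof.
  intros Hpos q q' Hq Hqq' Hq'.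
  pose proof (A_decr q q' Hq Hqq' Hq').
  destruct (Req_dec (A q) (A q')) as [E | NE]; [exact E | exfalso].
  set (dl := A q - A q').
  assert (Hdl : 0 < dl) by (unfold dl; lra).
  destruct (filterlim_within_Rabs A _ q (A_cont q ltac:(lra)) (dl / 2) ltac:(lra))
    as [d1 [Hd1 Hnear_q]].
  destruct (filterlim_within_Rabs A _ q' (A_cont q' ltac:(lra)) (dl / 2) ltac:(lra))
    as [d2 [Hd2 Hnear_q']].
  assert (Hlt : q < q') by (destruct (Req_dec q q'); [subst; lra | lra]).
  set (h1 := Rmin (d1 / 2) ((q' - q) / 3)).
  set (h2 := Rmin (d2 / 2) ((q' - q) / 3)).
  assert (0 < h1 <= d1 / 2 /\ h1 <= (q' - q) / 3)
    by (unfold h1; repeat split; [apply Rmin_pos | apply Rmin_l | apply Rmin_r]; lra).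
  assert (0 < h2 <= d2 / 2 /\ h2 <= (q' - q) / 3)
    by (unfold h2; repeat split; [apply Rmin_pos | apply Rmin_l | apply Rmin_r]; lra).
  assert (Ha : Rabs (A (q + h1) - A q) < dl / 2).
  { apply Hnear_q; [lra|]. rewrite Rabs_right; lra. }
  assert (Hb : Rabs (A (q' - h2) - A q') < dl / 2).
  { apply Hnear_q'; [lra|]. rewrite Rabs_left; lra. }
  apply Rabs_def2 in Ha. apply Rabs_def2 in Hb.
  assert (A (q + h1) <= A (q' - h2))
    by (apply (nondecreasing_of_derive_nonneg A A' 0 D); auto; lra).
  unfold dl in *. lra.
Qed.

End ConstantOnInterval.

Definition wtp_coef (pi b t : R) : R := t * b + pi * (1 - b).

Lemma wtpE pi A' Q b t : wtp pi A' Q b t = - (wtp_coef pi b t * A' Q).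
Proof. unfold wtp, wtp_coef. ring. Qed.

Lemma Lpay_sub pi dbar A q q' b t :
  Lpay pi dbar A q' b t - Lpay pi dbar A q b t = wtp_coef pi b t * (A q - A q').
Proof. unfold Lpay, wtp_coef. ring. Qed.

Section IncreasingDifferences.

Variables (pi dbar D : R) (A A' : R -> R) (N : nat) (bt th : nat -> R).

Hypothesis A_cont : forall x, 0 <= x <= D ->
  filterlim A (within (fun y => 0 <= y <= D) (locally x)) (locally (A x)).
Hypothesis A_der : forall x, 0 < x < D -> is_derive A x (A' x).
Hypothesis A_decr : forall x y, 0 <= x -> x <= y -> y <= D -> A y <= A x.
Hypothesis wtp_sorted : forall x i, 0 <= x <= D -> (1 <= i < N)%nat ->
  wtp pi A' x (bt i) (th i) <= wtp pi A' x (bt (S i)) (th (S i)).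

Lemma wtp_coef_sorted_of_derive_neg x : 0 <= x <= D -> A' x < 0 ->
  forall i j, (1 <= i)%nat -> (i <= j)%nat -> (j <= N)%nat ->
  wtp_coef pi (bt i) (th i) <= wtp_coef pi (bt j) (th j).
Proof.
  intros Hx Hneg. apply nat_chain_le.
  intros k Hk. pose proof (wtp_sorted x k Hx Hk) as Hs. rewrite !wtpE in Hs.
  nra.
Qed.

Lemma Lpay_increasing_differences i j q q' :
  (1 <= i)%nat -> (i <= j)%nat -> (j <= N)%nat -> 0 <= q -> q <= q' -> q' <= D ->
  Lpay pi dbar A q' (bt i) (th i) - Lpay pi dbar A q (bt i) (th i)
    <= Lpay pi dbar A q' (bt j) (th j) - Lpay pi dbar A q (bt j) (th j).
Proof.
  intros Hi Hij Hj Hq Hqq' Hq'. rewrite !Lpay_sub.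
  destruct (classic (exists x, 0 <= x <= D /\ A' x < 0)) as [[x [Hx Hneg]] | Hnone].
  - pose proof (wtp_coef_sorted_of_derive_neg x Hx Hneg i j Hi Hij Hj).
    pose proof (A_decr q q' Hq Hqq' Hq'). nra.
  - assert (Hpos : forall x, 0 < x < D -> 0 <= A' x).
    { intros x Hx. apply Rnot_lt_le. intros Hneg. apply Hnone. exists x. split; [lra | exact Hneg]. }
    rewrite (decreasing_const_of_derive_nonneg A A' D A_cont A_der A_decr Hpos q q' Hq Hqq' Hq').
    lra.
Qed.

End IncreasingDifferences.

Theorem theorem2
  (pi dbar D : R) (K M : nat)
  (theta beta : nat -> R)            (* theta_1..theta_K, beta_1..beta_M (1-based) *)
  (A A' : R -> R)                    (* expected overage consumption and its derivative *)
  (e : nat -> nat * nat)             (* enumeration: Lambda_i = (beta_(e i).1, theta_(e i).2) *)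
  (eps : nat) (Q Pi : nat -> R)
  (* parameters *)
  (Hpi : 0 < pi) (Hdbar : 0 < dbar) (HD : 0 < D)
  (HK : (1 <= K)%nat) (HM : (1 <= M)%nat)
  (Htheta1 : 0 < theta 1%nat)
  (Htheta : forall k, (1 <= k < K)%nat -> theta k < theta (S k))
  (Hbeta1 : 0 <= beta 1%nat) (HbetaM : beta M <= 1)
  (Hbeta : forall m, (1 <= m < M)%nat -> beta m < beta (S m))
  (* A : [0,D] -> [0,dbar], continuously differentiable (derivative A'), decreasing *)
  (HArange : forall x, 0 <= x <= D -> 0 <= A x <= dbar)
  (HAcont : forall x, 0 <= x <= D ->
     filterlim A (within (fun y => 0 <= y <= D) (locally x)) (locally (A x)))
  (HAder : forall x, 0 < x < D -> is_derive A x (A' x))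
  (HA'cont : forall x, 0 <= x <= D ->
     filterlim A' (within (fun y => 0 <= y <= D) (locally x)) (locally (A' x)))
  (HAdec : forall x y, 0 <= x -> x <= y -> y <= D -> A y <= A x)
  (* enumeration of the K*M types: a bijection {1..KM} -> {1..M} x {1..K} *)
  (He_range : forall i, (1 <= i <= K * M)%nat ->
     (1 <= fst (e i) <= M)%nat /\ (1 <= snd (e i) <= K)%nat)
  (He_inj : forall i j, (1 <= i <= K * M)%nat -> (1 <= j <= K * M)%nat -> e i = e j -> i = j)
  (He_surj : forall m k, (1 <= m <= M)%nat -> (1 <= k <= K)%nat ->
     exists i, (1 <= i <= K * M)%nat /\ e i = (m, k))
  (* ordering by willingness to pay *)
  (Hsigma : forall Q0 i, 0 <= Q0 <= D -> (1 <= i < K * M)%nat ->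
     wtp pi A' Q0 (beta (fst (e i))) (theta (snd (e i)))
       <= wtp pi A' Q0 (beta (fst (e (S i)))) (theta (snd (e (S i)))))
  (* Lambda_eps has the smallest expected payoff *)
  (Heps_range : (1 <= eps <= K * M)%nat)
  (Heps : forall Q0 Pi0 i, 0 <= Q0 <= D -> (1 <= i <= K * M)%nat ->
     Sbar pi dbar A Q0 Pi0 (beta (fst (e eps))) (theta (snd (e eps)))
       <= Sbar pi dbar A Q0 Pi0 (beta (fst (e i))) (theta (snd (e i))))
  (* contract caps in [0,D] *)
  (HQ : forall i, (1 <= i <= K * M)%nat -> 0 <= Q i <= D)
  (* 1) monotone caps *)
  (H1 : forall i, (1 <= i < K * M)%nat -> Q i <= Q (S i))
  (* 2) *)
  (H2 : Pi eps <= Lpay pi dbar A (Q eps) (beta (fst (e eps))) (theta (snd (e eps))))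
  (* 3) *)
  (H3 : forall i, (1 <= i < eps)%nat ->
     Pi i <= Pi (S i) + eta_plus pi dbar A (beta (fst (e i))) (theta (snd (e i))) (Q i) (Q (S i)) /\
     Pi (S i) - eta_minus pi dbar A (beta (fst (e (S i)))) (theta (snd (e (S i)))) (Q (S i)) (Q i)
       <= Pi i)
  (* 4) *)
  (H4 : forall i, (eps < i <= K * M)%nat ->
     Pi i <= Pi (pred i) + eta_minus pi dbar A (beta (fst (e i))) (theta (snd (e i))) (Q i) (Q (pred i)) /\
     Pi (pred i) - eta_plus pi dbar A (beta (fst (e (pred i)))) (theta (snd (e (pred i)))) (Q (pred i)) (Q i)
       <= Pi i) :
  feasible pi dbar A (K * M)
    (fun i => beta (fst (e i))) (fun i => theta (snd (e i))) Q Pi.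
Proof.
  set (g := fun i q => Lpay pi dbar A q (beta (fst (e i))) (theta (snd (e i)))).
  assert (adjacent_IC : forall k, (1 <= k < K * M)%nat ->
    (g k (Q (S k)) - Pi (S k) <= g k (Q k) - Pi k) /\
    (g (S k) (Q k) - Pi k <= g (S k) (Q (S k)) - Pi (S k))).
  { intros k Hk. unfold g. destruct (Nat.lt_ge_cases k eps).
    - destruct (H3 k ltac:(lia)). unfold eta_plus, eta_minus in *. lra.
    - destruct (H4 (S k) ltac:(lia)). unfold eta_plus, eta_minus in *. simpl pred in *. lra. }
  assert (IC : forall i j, (1 <= i <= K * M)%nat -> (1 <= j <= K * M)%nat ->
    g i (Q j) - Pi j <= g i (Q i) - Pi i).
  { apply global_IC_of_adjacent_IC.
    - intros i j k Hi Hij Hk. pose proof (HQ k ltac:(lia)). pose proof (HQ (S k) ltac:(lia)).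
      apply (Lpay_increasing_differences pi dbar D A A' (K * M)
               (fun i => beta (fst (e i))) (fun i => theta (snd (e i))));
        auto; try lia; try lra.
    - intros k Hk. apply (adjacent_IC k Hk).
    - intros k Hk. apply (adjacent_IC k Hk). }
  split.
  - intros i Hi.
    pose proof (IC i eps Hi Heps_range).
    pose proof (Heps (Q eps) (Pi eps) i (HQ eps Heps_range) Hi).
    unfold Sbar, g in *. lra.
  - intros i j Hi Hj _. pose proof (IC i j Hi Hj). unfold Sbar, g in *. lra.
Qed.
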